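(* Let $q$ be a prime power and let $L\subseteq[q-1]$ with $|L|=s\ge1$. If $\mathcal{F}\subseteq 2^{[n]}$ is $q$-modular $L$-differencing Sperner, then $$|\mathcal{F}|\le\sum_{i=0}^{2^{s-1}}\binom{n}{i}.$$
   Context: $[n]=\{1,\ldots,n\}$, $2^{[n]}$ is the family of all subsets of $[n]$. For $L\subseteq[q-1]$, $\mathcal{F}$ is $q$-modular $L$-differencing Sperner if for all distinct $A,B\in\mathcal{F}$, $|A\setminus B|\equiv\ell\pmod q$ for some $\ell\in L$. *)

From mathcomp Require Import all_boot.
Set Implicit Arguments. Unset Strict Implicit. Unset Printing Implicit Defensive.

Definition prime_power (q : nat) : Prop :=
  exists p k : nat, prime p /\ 0 < k /\ q = p ^ k.

(* Ground set [n] is represented by 'I_n; 2^[n] by {set 'I_n}. *)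
Definition modular_L_differencing_Sperner (n q : nat) (L : {set 'I_q})
  (F : {set {set 'I_n}}) : Prop :=
  forall A B, A \in F -> B \in F -> A != B ->
    exists2 l, l \in L & #|A :\: B| = nat_of_ord l %[mod q].

(* Order L as l_0, ..., l_(s-1) by decreasing p-adic valuation t_i and put
   f(x) = prod_i (x - l_i)^(w_i) with w_0 = 1 and w_i = 2^(i-1).  For A in F the
   map B |-> f(|A \ B|) is a multilinear polynomial of degree sum_i w_i = 2^(s-1)
   in the indicator vector of B, so the F x F matrix M = (f(|A \ B|)) has rank at
   most the number of subsets of [n] of size at most 2^(s-1).  Let e = sum_i w_i t_i.
   Each diagonal entry f(0) has p-valuation exactly e.  An off-diagonal entry has
   |A \ B| = l_j (mod q) for some j, so x - l_j gains valuation k > t_j while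
   x - l_i keeps valuation at least min(t_i, t_j); since each w_j dominates the sum
   of the earlier weights, the gain outweighs the loss and the valuation exceeds e.
   Hence M / p^e is invertible modulo p, M is nonsingular, and |F| = rank M. *)

From mathcomp Require Import all_boot all_algebra zify.
Set Implicit Arguments. Unset Strict Implicit. Unset Printing Implicit Defensive.
Import GRing.Theory.

Section LowDegree.
Local Open Scope ring_scope.
Variables (R : comPzRingType) (T : finType).

(* [g] is a linear combination of the monomials B |-> [S \subset B] with
   #|S| <= d, i.e. a multilinear polynomial of degree <= d in the indicator of B. *)
Definition low_degree (d : nat) (g : {set T} -> R) :=
  exists2 r : seq (R * {set T}), all (fun a : R * {set T} => #|a.2| <= d)%N r &
    g =1 fun B => \sum_(a <- r) a.1 * (a.2 \subset B)%:R.

Lemma eq_low_degree d g h : g =1 h -> low_degree d g -> low_degree d h.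
Proof. by move=> gh [r r_d g_r]; exists r => // B; rewrite -gh. Qed.

Lemma low_degree_const d c : low_degree d (fun _ => c).
Proof.
by exists [:: (c, set0)]; rewrite /= ?cards0 // => B; rewrite big_seq1 sub0set mulr1.
Qed.

Lemma low_degree_mem x : low_degree 1 (fun B => (x \in B)%:R).
Proof.
by exists [:: (1, [set x])]; rewrite /= ?cards1 // => B; rewrite big_seq1 sub1set mul1r.
Qed.

Lemma low_degree_add d g h :
  low_degree d g -> low_degree d h -> low_degree d (fun B => g B + h B).
Proof.
move=> [r r_d g_r] [r' r'_d h_r']; exists (r ++ r'); first by rewrite all_cat r_d.
by move=> B; rewrite big_cat g_r h_r'.
Qed.

Lemma low_degree_mul d1 d2 g h :
  low_degree d1 g -> low_degree d2 h -> low_degree (d1 + d2) (fun B => g B * h B).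
Proof.
move=> [r r_d g_r] [r' r'_d h_r'].
exists [seq (a.1 * b.1, a.2 :|: b.2) | a <- r, b <- r'].
  apply/allP => _ /allpairsPdep[a [b [ar br ->]]] /=.
  apply: leq_trans (leq_card_setU _ _) (leq_add _ _); first exact: (allP r_d).
  exact: (allP r'_d).
move=> B; rewrite g_r h_r' big_allpairs_dep mulr_suml; apply: eq_bigr => a _.
by rewrite mulr_sumr; apply: eq_bigr => b _; rewrite subUset -mulnb natrM mulrACA.
Qed.

Lemma low_degree_sum I (r : seq I) d (G : I -> {set T} -> R) :
  (forall i, low_degree d (G i)) -> low_degree d (fun B => \sum_(i <- r) G i B).
Proof.
move=> G_d; elim: r => [|i r IH].
  by apply: eq_low_degree (low_degree_const d 0) => B; rewrite big_nil.
by apply: eq_low_degree (low_degree_add (G_d i) IH) => B; rewrite big_cons.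
Qed.

Lemma low_degree_prod I (r : seq I) (d : I -> nat) (G : I -> {set T} -> R) :
  (forall i, low_degree (d i) (G i)) ->
  low_degree (\sum_(i <- r) d i) (fun B => \prod_(i <- r) G i B).
Proof.
move=> G_d; elim: r => [|i r IH].
  by apply: eq_low_degree (low_degree_const _ 1) => B; rewrite big_nil.
rewrite big_cons; apply: eq_low_degree (low_degree_mul (G_d i) IH) => B.
by rewrite big_cons.
Qed.

Lemma low_degree_exp d g m : low_degree d g -> low_degree (m * d) (fun B => g B ^+ m).
Proof.
move=> g_d; elim: m => [|m IH].
  by apply: eq_low_degree (low_degree_const _ 1) => B; rewrite expr0.
by rewrite mulSn; apply: eq_low_degree (low_degree_mul g_d IH) => B; rewrite exprS.
Qed.

Lemma low_degree_card_setD (A : {set T}) c :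
  low_degree 1 (fun B => #|A :\: B|%:R - c).
Proof.
have comp_mem x : low_degree 1 (fun B => 1 - (x \in B)%:R).
  apply: low_degree_add; first exact: low_degree_const.
  have := low_degree_mul (low_degree_const 0 (-1)) (low_degree_mem x).
  by apply: eq_low_degree => B; rewrite mulN1r.
have := low_degree_add (low_degree_sum (enum A) comp_mem) (low_degree_const 1 (- c)).
apply: eq_low_degree => B; congr (_ - _).
rewrite big_enum /= -sum1_card natr_sum big_mkcond [RHS]big_mkcond /=.
apply: eq_bigr => x _; rewrite in_setD.
by case: (x \in A); case: (x \in B); rewrite ?subrr ?subr0.
Qed.

End LowDegree.

Section Rank.
Local Open Scope ring_scope.

Lemma mxrank_low_degree_rows (F : fieldType) (T : finType) m m' d
    (M : 'M[F]_(m, m')) (A : 'I_m' -> {set T}) :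
  (forall i, exists2 g, low_degree d g & forall j, M i j = g (A j)) ->
  (\rank M <= #|[set S : {set T} | #|S| <= d]|)%N.
Proof.
move=> M_low; set small := [set S | _].
have small0 : set0 \in small by rewrite inE cards0.
pose N : 'M[F]_(#|small|, m') :=
  \matrix_(S, j) (enum_val (S : 'I_#|small|) \subset A j)%:R.
apply: leq_trans (rank_leq_row N); apply: mxrankS; apply/row_subP => i.
have [g [r r_d g_r] Mg] := M_low i.
have -> : row i M = \sum_(a <- r) a.1 *: row (enum_rank_in small0 a.2) N.
  apply/rowP => j; rewrite mxE Mg g_r summxE big_seq [RHS]big_seq.
  apply: eq_bigr => a ar; rewrite !mxE enum_rankK_in // inE.
  exact: (allP r_d).
by apply: summx_sub => a _; apply/scalemx_sub/row_sub.
Qed.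

End Rank.

Lemma card_small_subsets (T : finType) d :
  #|[set S : {set T} | #|S| <= d]| = \sum_(0 <= i < d.+1) 'C(#|T|, i).
Proof.
elim: d => [|d IH].
  by rewrite big_nat1 -card_draws; apply: eq_card => S; rewrite !inE leqn0.
rewrite big_nat_recr //= -IH -card_draws -cardsUI.
have -> : [set S : {set T} | #|S| <= d] :&: [set S : {set T} | #|S| == d.+1]
          = set0 :> {set {set T}}.
  by apply/setP => S; rewrite !inE -ltnS; case: ltngtP.
by rewrite cards0 addn0; apply: eq_card => S; rewrite !inE leq_eqVlt ltnS orbC.
Qed.

Section DetModPrime.
Local Open Scope ring_scope.
Variables (p : nat) (m : nat).
Hypothesis p_pr : prime p.

Lemma det_neq0_mod_prime (N : 'M[int]_m) :
  (forall i j, i != j -> (p %| N i j)%Z) -> (forall i, ~~ (p %| N i i)%Z) ->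
  \det N != 0.
Proof.
move=> p_off p'_diag; have charFp := pchar_Fp p_pr.
have N_diag : map_mx (intr : int -> 'F_p) N = diag_mx (\row_i (N i i)%:~R).
  apply/matrixP => i j; rewrite !mxE; case: eqVneq => [<-|ij]; first by rewrite mulr1n.
  by rewrite mulr0n; apply/eqP; rewrite -(dvdz_pcharf charFp) p_off.
have : \det (map_mx (intr : int -> 'F_p) N) != 0.
  rewrite N_diag det_diag; apply/prodf_neq0 => i _.
  by rewrite mxE -(dvdz_pcharf charFp) p'_diag.
by apply: contraNneq => detN0; rewrite det_map_mx detN0 rmorph0.
Qed.

Lemma det_neq0_pfactor_diag e (M : 'M[int]_m) :
  (forall i j, i != j -> ((p ^ e.+1)%N %| M i j)%Z) ->
  (forall i, ((p ^ e)%N %| M i i)%Z && ~~ ((p ^ e.+1)%N %| M i i)%Z) ->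
  \det M != 0.
Proof.
move=> M_off M_diag; have pe_gt0 : (0 < p ^ e)%N by rewrite expn_gt0 prime_gt0.
have pe_dvd i j : ((p ^ e)%N %| M i j)%Z.
  case: (eqVneq i j) => [<-|/M_off]; first by case/andP: (M_diag i).
  by apply: dvdz_trans; rewrite dvdzE /= dvdn_exp2l.
pose N := \matrix_(i, j) (M i j %/ (p ^ e)%N)%Z.
have -> : M = (p ^ e)%N%:Z *: N by apply/matrixP => i j; rewrite !mxE mulrC divzK.
rewrite detZ mulf_neq0 ?expf_neq0 ?eqz_nat -?lt0n //.
have dvdN i j : ((p ^ e.+1)%N %| M i j)%Z = (p %| N i j)%Z.
  rewrite mxE -{1}(divzK (pe_dvd i j)) expnS PoszM.
  by rewrite (@dvdz_mul2r (p ^ e)%N) // eqz_nat -lt0n.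
apply: det_neq0_mod_prime => [i j /M_off|i]; first by rewrite dvdN.
by rewrite -dvdN; case/andP: (M_diag i).
Qed.

End DetModPrime.

Lemma sum_exp2_pred j : \sum_(0 <= i < j.+1) 2 ^ i.-1 = 2 ^ j.
Proof.
elim: j => [|j IH]; first by rewrite big_nat1.
by rewrite big_nat_recr //= IH expnS mul2n addnn.
Qed.

Lemma weighted_sum_lt s k j (t u : nat -> nat) :
  j < s -> (forall i, i <= j -> t i < k) -> k <= u j ->
  (forall i, i < j -> t j <= u i) -> (forall i, j < i < s -> t i <= u i) ->
  \sum_(0 <= i < s) 2 ^ i.-1 * t i < \sum_(0 <= i < s) 2 ^ i.-1 * u i.
Proof.
move=> lt_js t_lt_k k_le_uj u_head u_tail.
have split_j w : \sum_(0 <= i < s) w i =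
    \sum_(0 <= i < j) w i + (w j + \sum_(j.+1 <= i < s) w i).
  by rewrite (@big_cat_nat _ _ _ j) ?(ltnW lt_js) // (big_ltn lt_js).
rewrite !split_j.
set W := \sum_(0 <= i < j) 2 ^ i.-1.
have W_le : W <= 2 ^ j.-1.
  by rewrite /W; case: (j) => [|j']; [rewrite big_geq | rewrite sum_exp2_pred].
have head_t : \sum_(0 <= i < j) 2 ^ i.-1 * t i + W <= W * k.
  rewrite -big_split big_distrl /= big_nat_cond [X in _ <= X]big_nat_cond.
  apply: leq_sum => i /andP[/andP[_ lt_ij] _].
  by rewrite -mulnSr leq_mul2l t_lt_k ?orbT // ltnW.
have head_u : W * t j <= \sum_(0 <= i < j) 2 ^ i.-1 * u i.
  rewrite big_distrl /= big_nat_cond [X in _ <= X]big_nat_cond.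
  by apply: leq_sum => i /andP[/andP[_ lt_ij] _]; rewrite leq_mul2l u_head ?orbT.
have tail : \sum_(j.+1 <= i < s) 2 ^ i.-1 * t i <= \sum_(j.+1 <= i < s) 2 ^ i.-1 * u i.
  rewrite big_nat_cond [X in _ <= X]big_nat_cond.
  by apply: leq_sum => i /andP[ji_s _]; rewrite leq_mul2l u_tail ?orbT.
have w_gt0 : 0 < 2 ^ j.-1 by rewrite expn_gt0.
have [d k_def] : exists d, k = (t j).+1 + d.
  by exists (k - (t j).+1); rewrite subnKC ?t_lt_k.
have Wd : W * d <= 2 ^ j.-1 * d by rewrite leq_mul2r W_le orbT.
have wk : 2 ^ j.-1 * k <= 2 ^ j.-1 * u j by rewrite leq_mul2l k_le_uj orbT.
rewrite k_def !mulnDr !mulnS in head_t wk.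
lia.
Qed.

Lemma logn_ltn_exp p k n : 1 < p -> 0 < n < p ^ k -> logn p n < k.
Proof.
move=> p_gt1 /andP[n_gt0 n_lt]; rewrite -(ltn_exp2l _ _ p_gt1).
exact: leq_ltn_trans (dvdn_leq n_gt0 (pfactor_dvdnn p n)) n_lt.
Qed.

Lemma logn_prod p (I : eqType) (r : seq I) (F : I -> nat) :
  {in r, forall i, 0 < F i} -> logn p (\prod_(i <- r) F i) = \sum_(i <- r) logn p (F i).
Proof.
elim: r => [|i r IH] F_gt0; first by rewrite !big_nil logn1.
have F_gt0r : {in r, forall j, 0 < F j} by move=> j rj; rewrite F_gt0 // inE rj orbT.
rewrite !big_cons lognM ?IH ?F_gt0 ?mem_head //.
by rewrite big_seq prodn_cond_gt0.
Qed.

(* The weights 2 ^ i.-1 are 1, 1, 2, 4, ... (note 2 ^ 0.-1 = 1): they sum to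
   2 ^ s.-1, and each is at least the sum of the previous ones. *)
Definition sperner_poly (s : nat) (l : nat -> nat) (x : nat) : int :=
  (\prod_(0 <= i < s) (x%:Z - (l i)%:Z) ^+ (2 ^ i.-1))%R.

Lemma abs_sperner_poly s l x :
  `|sperner_poly s l x| = \prod_(0 <= i < s) `|(x%:Z - (l i)%:Z)%R| ^ 2 ^ i.-1.
Proof.
rewrite /sperner_poly (big_morph _ abszM (erefl : `|1%R| = 1)).
by apply: eq_bigr => i _; rewrite abszX.
Qed.

Section SpernerPolyValuation.
Variables (p k s : nat) (l : nat -> nat).
Hypotheses (p_pr : prime p) (l_range : forall i, i < s -> 0 < l i < p ^ k).
Hypothesis l_sorted : forall i i', i <= i' < s -> logn p (l i') <= logn p (l i).
Local Notation t i := (logn p (l i)).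
Local Notation e := (\sum_(0 <= i < s) 2 ^ i.-1 * t i).

Lemma sperner_poly0_pfactor :
  ((p ^ e)%N %| sperner_poly s l 0)%Z && ~~ ((p ^ e.+1)%N %| sperner_poly s l 0)%Z.
Proof.
have l_gt0 i : i \in index_iota 0 s -> 0 < l i.
  by rewrite mem_index_iota => /l_range/andP[].
have abs_f0 : `|sperner_poly s l 0| = \prod_(0 <= i < s) l i ^ 2 ^ i.-1.
  by rewrite abs_sperner_poly; apply: eq_bigr => i _; rewrite sub0r abszN.
have f0_gt0 : 0 < \prod_(0 <= i < s) l i ^ 2 ^ i.-1.
  by rewrite big_seq prodn_cond_gt0 // => i /l_gt0; rewrite expn_gt0 => ->.
rewrite !dvdzE /= abs_f0 !pfactor_dvdn // logn_prod => [|i /l_gt0]; last first.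
  by rewrite expn_gt0 => ->.
have -> : \sum_(0 <= i < s) logn p (l i ^ 2 ^ i.-1) = e.
  by apply: eq_bigr => i _; rewrite lognX.
by rewrite leqnn ltnn.
Qed.

Lemma pfactor_dvdz_sperner_poly x j :
  j < s -> x = l j %[mod p ^ k] -> ((p ^ e.+1)%N %| sperner_poly s l x)%Z.
Proof.
move=> lt_js x_lj.
(* [u i] bounds the p-valuation of x - l i from below; as the l i are sorted,
   minn (t i) (t j) is t j for i < j and t i for i > j. *)
pose u i := if i == j then k else minn (t i) (t j).
have e_lt : e < \sum_(0 <= i < s) 2 ^ i.-1 * u i.
  apply: (weighted_sum_lt lt_js) => [i le_ij||i lt_ij|i /andP[lt_ji lt_is]].
  - exact/logn_ltn_exp/l_range/(leq_ltn_trans le_ij lt_js)/prime_gt1.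
  - by rewrite /u eqxx.
  - by rewrite /u ltn_eqF // leq_min leqnn andbT l_sorted // (ltnW lt_ij).
  - by rewrite /u gtn_eqF // leq_min leqnn l_sorted // ltnW.
have dvd_factor i : i < s -> ((p ^ u i)%N %| (x%:Z - (l i)%:Z)%R)%Z.
  move=> lt_is; have pk_xj : ((p ^ k)%N %| (x%:Z - (l j)%:Z)%R)%Z.
    by rewrite -eqz_mod_dvd !modz_nat x_lj.
  rewrite /u; case: eqP => [-> //|_]; set d := minn _ _.
  have dvd_l i' : i' < s -> d <= t i' -> ((p ^ d)%N %| (l i')%:Z)%Z.
    by move=> lt_i's le_d; rewrite dvdzE /= pfactor_dvdn //; case/andP: (l_range lt_i's).
  have dvd_xj : ((p ^ d)%N %| (x%:Z - (l j)%:Z)%R)%Z.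
    apply: dvdz_trans pk_xj; rewrite dvdzE /= dvdn_exp2l // (leq_trans (geq_minr _ _)) //.
    exact/ltnW/logn_ltn_exp/l_range/lt_js/prime_gt1.
  rewrite -[Posz x](subrK (Posz (l j))) -addrA.
  by rewrite rpredD // rpredB ?dvd_l ?geq_minl ?geq_minr.
apply: (@dvdz_trans (p ^ \sum_(0 <= i < s) 2 ^ i.-1 * u i)%N).
  by rewrite dvdzE /= dvdn_exp2l.
rewrite dvdzE /= abs_sperner_poly expn_sum big_seq [X in _ %| X]big_seq.
apply: (big_ind2 (fun a b => a %| b)) => // [a b a' b'|i]; first exact: dvdn_mul.
rewrite mem_index_iota mulnC expnM => /dvd_factor; rewrite dvdzE.
exact: dvdn_exp2r.
Qed.

End SpernerPolyValuation.

Lemma low_degree_sperner_poly (R : comPzRingType) (T : finType) (A : {set T}) s l :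
  0 < s -> low_degree (2 ^ s.-1) (fun B => ((sperner_poly s l #|A :\: B|)%:~R : R)%R).
Proof.
move=> s_gt0.
have -> : 2 ^ s.-1 = \sum_(0 <= i < s) 2 ^ i.-1 * 1.
  by rewrite -sum_exp2_pred prednK //; apply: eq_bigr => i _; rewrite muln1.
have factor_low i : low_degree (2 ^ i.-1 * 1)
    (fun B => (#|A :\: B|%:R - (l i)%:R : R) ^+ (2 ^ i.-1)%N)%R.
  exact/low_degree_exp/low_degree_card_setD.
apply: eq_low_degree (low_degree_prod _ factor_low) => B.
by rewrite /sperner_poly rmorph_prod; apply: eq_bigr => i _; rewrite rmorphXn rmorphB.
Qed.

Lemma sorted_enumeration (T : eqType) (x0 : T) (key : T -> nat) (r : seq T) :
  exists l : nat -> T,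
    [/\ forall i, i < size r -> l i \in r,
        forall x, x \in r -> exists2 i, i < size r & l i = x &
        forall i i', i <= i' < size r -> key (l i') <= key (l i)].
Proof.
pose leT a b := key b <= key a.
have leT_total : total leT by move=> a b; exact: leq_total.
exists (nth x0 (sort leT r)); split.
- by move=> i lt_ir; rewrite -(mem_sort leT) mem_nth ?size_sort.
- move=> x xr; exists (index x (sort leT r)); last by rewrite nth_index ?mem_sort.
  by rewrite -(size_sort leT) index_mem mem_sort.
- move=> i i' /andP[le_ii' lt_i'r].
  apply: (sorted_leq_nth _ _ x0 (sort_sorted leT_total r)) => //.
  + by move=> b a c; rewrite /leT => ba cb; apply: leq_trans ba.
  + by move=> a; rewrite /leT.
  + by rewrite inE size_sort (leq_ltn_trans le_ii').
  + by rewrite inE size_sort.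
Qed.

Theorem mainTheorem8 (n q s : nat) (L : {set 'I_q}) (F : {set {set 'I_n}}) :
  prime_power q ->
  (forall l : 'I_q, l \in L -> 1 <= nat_of_ord l) ->
  #|L| = s -> 1 <= s ->
  modular_L_differencing_Sperner L F ->
  #|F| <= \sum_(0 <= i < (2 ^ s.-1).+1) 'C(n, i).
Proof.
move=> [p [k [p_pr [_ q_def]]]] L_pos card_L s_gt0 F_sperner.
have [l [l_L L_l l_sorted]] := sorted_enumeration 0 (logn p) [seq val x | x <- enum L].
rewrite size_map -cardE card_L in l_L L_l l_sorted.
have l_range i : i < s -> 0 < l i < p ^ k.
  case/l_L/mapP => x; rewrite mem_enum => /L_pos x_pos ->.
  by rewrite x_pos -q_def ltn_ord.
pose m := #|F|; pose A (i : 'I_m) : {set 'I_n} := enum_val i.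
pose M : 'M[int]_m := (\matrix_(i, j) sperner_poly s l #|A i :\: A j|)%R.
have detM : (\det M != 0)%R.
  apply: (det_neq0_pfactor_diag p_pr) => [i j ij|i]; rewrite mxE; last first.
    by rewrite setDv cards0; exact: sperner_poly0_pfactor p_pr l_range.
  have Aij : A i != A j by apply: contra ij => /eqP/enum_val_inj->.
  have [x xL AiAj_x] := F_sperner _ _ (enum_valP i) (enum_valP j) Aij.
  have [j' lt_j's lj'] : exists2 j', j' < s & l j' = x.
    by apply: L_l; rewrite map_f ?mem_enum.
  by apply: (pfactor_dvdz_sperner_poly p_pr l_range l_sorted lt_j's); rewrite lj' -q_def.
have rankM : \rank (map_mx (intr : int -> rat) M) = m.
  by apply: mxrank_unit; rewrite unitmxE unitfE det_map_mx intr_eq0.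
suff : m <= #|[set S : {set 'I_n} | #|S| <= 2 ^ s.-1]|.
  by rewrite card_small_subsets card_ord.
rewrite -rankM; apply: (mxrank_low_degree_rows (A := A)) => i.
exists (fun B => (sperner_poly s l #|A i :\: B|)%:~R)%R; last by move=> j; rewrite !mxE.
exact: low_degree_sperner_poly.
Qed.
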